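(* Let $x_i\in K_i$ for every $1\le i\le N$, let $x\in K$, and let $i_0\in\{1,\dots,N\}$ be such that $x\in K_{i_0}$. Then for every integer $m\le 0$ and every $\epsilon>0$ there exist an integer $k\ge m$ and a set $B\in\mathcal{A}_m$ with $P^m_x(B)<\epsilon$ such that for all $\sigma\in\Sigma\setminus B$ and all $n\ge k$, $$d\big(Z^x_{mn}(\sigma),Y^{x_1\dots x_N}_{mn}(\sigma)\big)\le a^{\frac{n-m+1}{2}}\,d(x,x_{i_0}).$$
   Context: A contractive Markov system (CMS) with average contracting rate $0<a<1$ consists of: a finite directed multigraph $(V,E,i,t)$ with vertex set $V=\{1,\dots,N\}$, finite edge set $E$, and maps $i,t:E\to V$ giving the initial and terminal vertex of each edge; a complete metric space $(K,d)$ partitioned into non-empty Borel sets $K_1,\dots,K_N$; Borel measurable maps $w_e:K\to K$ ($e\in E$) with $w_e(K_{i(e)})\subset K_{t(e)}$; Borel measurable functions $p_e:K\to[0,\infty)$ with $\sum_{e\in E}p_e(x)=1$ for all $x\in K$ and $p_e=0$ on $K\setminus K_{i(e)}$; and such that $\sum_{e\in E}p_e(x)d(w_ex,w_ey)\leq a\,d(x,y)$ for all $x,y\in K_j$, $j=1,\dots,N$. Let $\Sigma:=E^{\mathbb{Z}}$. For $m\le n$ the cylinder $_m[e_m,\dots,e_n]:=\{\sigma\in\Sigma:\sigma_j=e_j,\ m\le j\le n\}$. For an integer $m\le 1$, $\mathcal{A}_m$ is the $\sigma$-algebra generated by the cylinders $_m[e_m,\dots,e_n]$, $n\ge m$. For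 $x\in K$, $P^m_x$ is the probability measure on $(\Sigma,\mathcal{A}_m)$ with $P^m_x(_m[e_m,\dots,e_n])=p_{e_m}(x)\,p_{e_{m+1}}(w_{e_m}x)\cdots p_{e_n}(w_{e_{n-1}}\circ\cdots\circ w_{e_m}x)$. For $x\in K$ and $m\le n$, $Z^x_{mn}(\sigma):=w_{\sigma_n}\circ\cdots\circ w_{\sigma_m}(x)$; for fixed $x_i\in K_i$, $Y^{x_1\dots x_N}_{mn}(\sigma):=w_{\sigma_n}\circ\cdots\circ w_{\sigma_m}(x_{i(\sigma_m)})$. *)

From HB Require Import structures.
From mathcomp Require Import all_boot all_order all_algebra.
From mathcomp Require Import all_classical all_reals all_analysis.
Set Implicit Arguments. Unset Strict Implicit. Unset Printing Implicit Defensive.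
Import Order.TTheory GRing.Theory Num.Theory.
Local Open Scope classical_set_scope.
Local Open Scope ring_scope.

(* The code space Sigma = E^Z.  The (otherwise irrelevant) element e0 : E is
   only used to equip Sigma with a pointedType structure, which mathcomp's
   generated-sigma-algebra construction requires. *)
Section Sig.
Variables (E : finType) (e0 : E).
Definition Sig (_ : E) : Type := int -> E.
HB.instance Definition _ := Choice.on (Sig e0).
HB.instance Definition _ := isPointed.Build (Sig e0) (fun _ => e0).
End Sig.

Section Metric.
Variables (R : realType) (K : Type) (d : K -> K -> R).

Definition is_metric : Prop :=
  [/\ forall x y, 0 <= d x y,
      forall x y, d x y = 0 <-> x = y,
      forall x y, d x y = d y x &
      forall x y z, d x z <= d x y + d y z].

Definition d_cauchy (u : nat -> K) : Prop :=
  forall eps : R, 0 < eps -> exists N : nat, forall n k : nat,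
    (N <= n)%N -> (N <= k)%N -> d (u n) (u k) < eps.

Definition d_converges (u : nat -> K) (l : K) : Prop :=
  forall eps : R, 0 < eps -> exists N : nat, forall n : nat,
    (N <= n)%N -> d (u n) l < eps.

Definition d_complete : Prop :=
  forall u : nat -> K, d_cauchy u -> exists l, d_converges u l.

Definition d_open (U : set K) : Prop :=
  forall x, U x -> exists r : R, 0 < r /\ [set y | d x y < r] `<=` U.

Definition d_borel : set (set K) := <<s d_open >>.

Definition d_borel_map (f : K -> K) : Prop :=
  forall A, d_borel A -> d_borel (f @^-1` A).

Definition d_borel_fun (f : K -> R) : Prop :=
  forall A : set R, measurable A -> d_borel (f @^-1` A).
End Metric.

Definition is_CMS (R : realType) (V E : finType) (ini ter : E -> V)
  (K : Type) (d : K -> K -> R) (Kp : V -> set K) (w : E -> K -> K)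
  (p : E -> K -> R) (a : R) : Prop :=
  [/\ 0 < a /\ a < 1, is_metric d /\ d_complete d,
      [/\ forall j, Kp j !=set0,
          forall j, d_borel d (Kp j),
          forall j j', j != j' -> Kp j `&` Kp j' = set0 &
          forall x, exists j, Kp j x],
      (forall e, d_borel_map d (w e)) /\
      (forall e x, Kp (ini e) x -> Kp (ter e) (w e x)) /\
      [/\ forall e, d_borel_fun d (p e),
          forall e x, 0 <= p e x,
          forall x, \sum_(e : E) p e x = 1 &
          forall e x, ~ Kp (ini e) x -> p e x = 0] &
      forall j x y, Kp j x -> Kp j y ->
        \sum_(e : E) p e x * d (w e x) (w e y) <= a * d x y].

Fixpoint wcomp (K E : Type) (w : E -> K -> K) (f : nat -> E) (k : nat) (x : K)
  : K :=
  match k with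
  | 0 => x
  | k'.+1 => w (f k') (wcomp w f k' x)
  end.

(* Z^x_{mn}(sigma) = w_{sigma_n} o ... o w_{sigma_m} (x), for m <= n *)
Definition Zmn (K E : Type) (w : E -> K -> K) (s : int -> E) (m n : int)
  (x : K) : K :=
  wcomp w (fun j : nat => s (m + j%:Z)) (absz (n - m)).+1 x.

(* Y^{x_1...x_N}_{mn}(sigma) = w_{sigma_n} o ... o w_{sigma_m}(x_{i(sigma_m)}) *)
Definition Ymn (K V E : Type) (ini : E -> V) (w : E -> K -> K)
  (xs : V -> K) (s : int -> E) (m n : int) : K :=
  Zmn w s m n (xs (ini (s m))).

(* the cylinder _m[f 0, ..., f k] = {sigma | sigma_{m+j} = f j, 0 <= j <= k} *)
Definition cyl (E : finType) (e0 : E) (m : int) (k : nat) (f : nat -> E)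
  : set (Sig e0) :=
  [set s : Sig e0 | forall j : nat, (j <= k)%N -> s (m + j%:Z) = f j].
Arguments cyl {E} e0 m k f.

Definition cylinders (E : finType) (e0 : E) (m : int) : set (set (Sig e0)) :=
  [set C | exists (k : nat) (f : nat -> E), C = cyl e0 m k f].
Arguments cylinders {E} e0 m.

(* A_m as a measurable type: Sigma with the sigma-algebra generated by the
   cylinders starting at m *)
Definition SigA (E : finType) (e0 : E) (m : int) :=
  g_sigma_algebraType (cylinders e0 m).
Arguments SigA {E} e0 m.

Definition cylP (R : realType) (K E : Type) (p : E -> K -> R)
  (w : E -> K -> K) (x : K) (k : nat) (f : nat -> E) : R :=
  \prod_(j < k.+1) p (f j) (wcomp w f j x).

From HB Require Import structures.
From mathcomp Require Import all_boot all_order all_algebra.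
From mathcomp Require Import all_classical all_reals all_analysis.
Import Order.TTheory GRing.Theory Num.Theory.
Local Open Scope classical_set_scope.
Local Open Scope ring_scope.
Set Implicit Arguments. Unset Strict Implicit. Unset Printing Implicit Defensive.

(* Iterating the average contraction along all words of length L gives
   E_x[d(Z_L x, Z_L x_{i0})] <= a^L d(x, x_{i0}); and under P^m_x the first
   edge starts in K_{i0} almost surely, so Y starts from x_{i0}.  By Markov's
   inequality the event that the distance after L steps exceeds
   a^{L/2} d(x, x_{i0}) is a finite union of cylinders of mass at most
   a^{L/2}.  The union of these events over L >= N has mass at most
   a^{N/2} / (1 - a^{1/2}), which is below eps for N large. *)

Section Words.
Variables (E : finType) (K : Type) (w : E -> K -> K).

Fixpoint wapp (g : seq E) (y : K) : K :=
  if g is e :: g' then wapp g' (w e y) else y.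

Fixpoint words (k : nat) : seq (seq E) :=
  if k is k'.+1 then [seq e :: g | e <- enum E, g <- words k'] else [:: [::]].

Lemma mem_words g : g \in words (size g).
Proof.
elim: g => [|e g IH] /=; first by rewrite inE.
by apply: (allpairs_f (fun e g => e :: g)); rewrite ?mem_enum.
Qed.

Lemma size_words k g : g \in words k -> size g = k.
Proof.
elim: k g => [|k IH] g /=; first by rewrite inE => /eqP ->.
by case/allpairsPdep => [e [g' [_ /IH size_g' ->]]] /=; rewrite size_g'.
Qed.

Lemma big_words_cons (R : nmodType) k (F : seq E -> R) :
  \sum_(g <- words k.+1) F g = \sum_(e : E) \sum_(g <- words k) F (e :: g).
Proof. by rewrite /= big_allpairs_dep big_enum. Qed.

Lemma wcompS (f : nat -> E) k y :
  wcomp w f k.+1 y = wcomp w (fun j => f j.+1) k (w (f 0%N) y).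
Proof. by elim: k => [|k IH] //=; rewrite -IH. Qed.

Lemma eq_wcomp (f f' : nat -> E) k y :
  (forall j, (j < k)%N -> f j = f' j) -> wcomp w f k y = wcomp w f' k y.
Proof.
by elim: k => [|k IH] ff' //=; rewrite ff' // IH // => j /ltnW; apply: ff'.
Qed.

Lemma wapp_wcomp (e0 : E) g y : wapp g y = wcomp w (nth e0 g) (size g) y.
Proof.
by elim: g y => [|e g IH] y //=; rewrite IH -(wcompS (nth e0 (e :: g))).
Qed.

Definition prefix (s : int -> E) (m : int) (k : nat) : seq E :=
  mkseq (fun j : nat => s (m + j%:Z)) k.

Lemma nth_prefix (e0 : E) s m k j :
  (j < k)%N -> nth e0 (prefix s m k) j = s (m + j%:Z).
Proof. exact: nth_mkseq. Qed.

Lemma mem_prefix_words s m k : prefix s m k \in words k.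
Proof.
by rewrite -[in words k](size_mkseq (fun j : nat => s (m + j%:Z)) k) mem_words.
Qed.

Lemma Zmn_prefix s m n y :
  Zmn w s m n y = wapp (prefix s m (absz (n - m)).+1) y.
Proof.
rewrite (wapp_wcomp (s m)) size_mkseq /Zmn.
by apply: eq_wcomp => j j_lt; rewrite nth_prefix.
Qed.

End Words.

Section Weights.
Variables (R : realType) (E : finType) (K : Type).
Variables (w : E -> K -> K) (p : E -> K -> R).

Fixpoint wt (g : seq E) (y : K) : R :=
  if g is e :: g' then p e y * wt g' (w e y) else 1.

Lemma wt_ge0 : (forall e y, 0 <= p e y) -> forall g y, 0 <= wt g y.
Proof. by move=> p_ge0; elim=> [|e g IH] y //=; rewrite mulr_ge0. Qed.

Lemma cylP_wt (e0 : E) k g y :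
  size g = k.+1 -> cylP p w y k (nth e0 g) = wt g y.
Proof.
move=> size_g; rewrite /cylP -size_g {k size_g}.
elim: g y => [|e g IH] y /=; first by rewrite big_ord0.
rewrite big_ord_recl -IH; congr (_ * _); apply: eq_bigr => j _.
by rewrite -(wcompS w (nth e0 (e :: g))).
Qed.

End Weights.

Lemma markov_sum (R : realFieldType) (T : eqType) (l : seq T) (W D : T -> R)
  (c t : R) :
  (forall g, 0 <= W g) -> (forall g, 0 <= D g) -> 0 <= c -> 0 <= t ->
  \sum_(g <- l) W g * D g <= c * t -> \sum_(g <- l | t < D g) W g <= c.
Proof.
move=> W_ge0 D_ge0 c_ge0; rewrite le0r => /orP[/eqP-> | t_gt0] sumWD.
  have /allP WD0 : all (fun g => true ==> (W g * D g == 0)) l.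
    rewrite -psumr_eq0 => [|g _]; last by rewrite mulr_ge0.
    rewrite eq_le (le_trans sumWD) ?mulr0 //=.
    by apply: sumr_ge0 => g _; rewrite mulr_ge0.
  rewrite big1_seq // => g /andP[D_gt0 /WD0].
  by rewrite /= mulf_eq0 (gt_eqF D_gt0) orbF => /eqP.
rewrite -(ler_pM2r t_gt0) big_distrl /=; apply: le_trans sumWD.
apply: (@le_trans _ _ (\sum_(g <- l | t < D g) W g * D g)).
  by apply: ler_sum => g /ltW tD; rewrite ler_wpM2l.
rewrite [X in _ <= X](bigID (fun g => t < D g)) /= lerDl.
by apply: sumr_ge0 => g _; rewrite mulr_ge0.
Qed.

Lemma le_measure_bigsetU_seq d (R : realType) (T : measurableType d)
  (mu : {measure set T -> \bar R}) (I : Type) (l : seq I) (Pr : pred I)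
  (F : I -> set T) :
  (forall i, measurable (F i)) ->
  (mu (\big[setU/set0]_(i <- l | Pr i) F i) <= \sum_(i <- l | Pr i) mu (F i))%E.
Proof.
move=> mF; elim: l => [|i l IH]; first by rewrite !big_nil measure0.
rewrite !big_cons; case: ifP => // _.
apply: le_trans (measureU2 _ (mF i) _) _; first exact: bigsetU_measurable.
exact: leeD.
Qed.

Lemma measure_bigcup_geometric_tail d (R : realType) (T : measurableType d)
  (mu : {measure set T -> \bar R}) (A : nat -> set T) (r : R) (N : nat) :
  (forall n, measurable (A n)) -> 0 < r -> r < 1 ->
  (forall n, mu (A n) <= (r ^+ n)%:E)%E ->
  (mu (\bigcup_(n in ~` `I_N) A n) <= (r ^+ N / (1 - r))%:E)%E.
Proof.
move=> mA r_gt0 r_lt1 muA.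
apply: le_trans (measure_sigma_subadditive_tail mu mA _ (@subset_refl _ _)) _.
  exact: bigcup_measurable.
apply: lime_le; first by apply: is_cvg_nneseries => n _ _.
apply: nearW => n; apply: (@le_trans _ _ (\sum_(N <= i < n) (r ^+ i)%:E)%E).
  by apply: lee_sum => i _.
rewrite sumEFin lee_fin; have [nN|Nn] := leqP n N.
  by rewrite big_geq // divr_ge0 ?exprn_ge0 ?subr_ge0 ?ltW.
rewrite -(subnKC (ltnW Nn)) geometric_partial_tail.
by rewrite geometric_le_lim ?exprn_ge0 ?ger0_norm ?ltW.
Qed.

Lemma exists_expr_lt (R : realType) (r c : R) :
  0 <= r -> r < 1 -> 0 < c -> exists N : nat, r ^+ N < c.
Proof.
move=> r_ge0 r_lt1 c_gt0.
have r_norm : `|r| < 1 by rewrite ger0_norm.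
have /cvgrPdist_lt /(_ _ c_gt0) [N _ rN] := cvg_expr r_norm.
exists N; have := rN N (leqnn N).
by rewrite /= sub0r normrN ger0_norm ?exprn_ge0.
Qed.

Lemma powR_half (R : realType) (a : R) (k : nat) :
  0 <= a -> powR a (k%:R / 2) = Num.sqrt a ^+ k.
Proof.
by move=> a_ge0; rewrite mulrC powRrM powR_mulrn ?powR_ge0 // powR12_sqrt.
Qed.

Lemma measurable_cyl (E : finType) (e0 : E) (m : int) k (f : nat -> E) :
  measurable (cyl e0 m k f : set (SigA e0 m)).
Proof. by apply: sub_sigma_algebra; exists k, f. Qed.

Section Contraction.
Variables (R : realType) (V E : finType) (ini ter : E -> V) (K : Type).
Variables (d : K -> K -> R) (Kp : V -> set K) (w : E -> K -> K).
Variables (p : E -> K -> R) (a : R).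
Hypotheses (d_ge0 : forall x y, 0 <= d x y) (a_ge0 : 0 <= a).
Hypotheses (p_ge0 : forall e x, 0 <= p e x)
  (p_off : forall e x, ~ Kp (ini e) x -> p e x = 0).
Hypothesis Kp_disj : forall j j', j != j' -> Kp j `&` Kp j' = set0.
Hypothesis w_Kp : forall e x, Kp (ini e) x -> Kp (ter e) (w e x).
Hypothesis contract : forall j x y, Kp j x -> Kp j y ->
  \sum_(e : E) p e x * d (w e x) (w e y) <= a * d x y.

Lemma Kp_uniq j j' y : Kp j y -> Kp j' y -> j = j'.
Proof.
move=> yj yj'; apply/eqP; apply/negP => /negP /Kp_disj jj'.
by have : (Kp j `&` Kp j') y by []; rewrite jj'.
Qed.

Lemma contract_words k y z j : Kp j y -> Kp j z ->
  \sum_(g <- words E k) wt w p g y * d (wapp w g y) (wapp w g z)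
  <= a ^+ k * d y z.
Proof.
elim: k y z j => [|k IH] y z j yj zj; first by rewrite big_seq1 /= !mul1r.
rewrite big_words_cons exprSr -mulrA.
apply: (@le_trans _ _ (\sum_(e : E) p e y * (a ^+ k * d (w e y) (w e z)))).
  apply: ler_sum => e _; under eq_bigr do rewrite /= -mulrA.
  rewrite -big_distrr /=.
  have [ey|ney] := pselect (Kp (ini e) y); last by rewrite p_off // !mul0r.
  have ej : ini e = j := Kp_uniq ey yj.
  by apply: ler_wpM2l => //; apply: (IH _ _ (ter e)); apply: w_Kp; rewrite ?ej.
under eq_bigr do rewrite mulrCA.
by rewrite -big_distrr ler_wpM2l ?exprn_ge0 // (contract yj zj).
Qed.

Variables (e0 : E) (xs : V -> K) (x : K) (i0 : V).
Hypotheses (x_i0 : Kp i0 x) (xs_i0 : Kp i0 (xs i0)).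

(* A word from x has weight 0 unless its first edge starts in K_{i0}. *)
Lemma contract_words_start k :
  \sum_(g <- words E k.+1)
    wt w p g x * d (wapp w g x) (wapp w g (xs (ini (nth e0 g 0))))
  <= a ^+ k.+1 * d x (xs i0).
Proof.
apply: le_trans (contract_words k.+1 x_i0 xs_i0).
rewrite !big_words_cons; apply: ler_sum => e _; apply: ler_sum => g _ /=.
have [ex|nex] := pselect (Kp (ini e) x); first by rewrite (Kp_uniq ex x_i0).
by rewrite p_off // !mul0r.
Qed.

Definition far_word (k : nat) (g : seq E) : bool :=
  Num.sqrt a ^+ k.+1 * d x (xs i0)
  < d (wapp w g x) (wapp w g (xs (ini (nth e0 g 0)))).

Lemma weight_far_words k :
  \sum_(g <- words E k.+1 | far_word k g) wt w p g x <= Num.sqrt a ^+ k.+1.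
Proof.
apply: markov_sum.
- by move=> g; apply: wt_ge0.
- by move=> g; apply: d_ge0.
- by rewrite exprn_ge0 ?sqrtr_ge0.
- by rewrite mulr_ge0 ?exprn_ge0 ?sqrtr_ge0.
by rewrite mulrA -exprMn -expr2 sqr_sqrtr //; apply: contract_words_start.
Qed.

Variables (m : int) (P : probability (SigA e0 m) R).
Hypothesis P_cyl : forall k f, P (cyl e0 m k f) = (cylP p w x k f)%:E.

Definition far_event (k : nat) : set (SigA e0 m) :=
  \big[setU/set0]_(g <- words E k.+1 | far_word k g) cyl e0 m k (nth e0 g).

Lemma far_event_measurable k : measurable (far_event k).
Proof. by apply: bigsetU_measurable => g _; apply: measurable_cyl. Qed.

Lemma measure_far_event k : (P (far_event k) <= (Num.sqrt a ^+ k.+1)%:E)%E.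
Proof.
rewrite /far_event.
apply: le_trans (le_measure_bigsetU_seq _ _ _
                   (fun g => measurable_cyl k (nth e0 g))) _.
rewrite big_seq_cond (eq_bigr (fun g => (wt w p g x)%:E)).
  by rewrite -big_seq_cond sumEFin lee_fin weight_far_words.
move=> g /andP[/size_words g_size _].
by rewrite -(cylP_wt w p e0 x g_size); apply: P_cyl.
Qed.

Lemma dist_Zmn_Ymn_le s n k : n - m = k%:Z -> ~ far_event k s ->
  d (Zmn w s m n x) (Ymn ini w xs s m n) <= Num.sqrt a ^+ k.+1 * d x (xs i0).
Proof.
move=> nmk s_near; rewrite /Ymn (_ : s m = nth e0 (prefix s m k.+1) 0).
  rewrite !Zmn_prefix nmk absz_nat leNgt; apply/negP => far_s; apply: s_near.
  rewrite /far_event -bigcup_seq_cond; exists (prefix s m k.+1).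
    by apply/andP; split; [exact: mem_prefix_words | exact: far_s].
  by move=> j j_le; rewrite nth_prefix.
by rewrite nth_prefix // addr0.
Qed.

End Contraction.

Theorem lemma5 (R : realType) (V E : finType) (e0 : E) (ini ter : E -> V)
  (K : Type) (d : K -> K -> R) (Kp : V -> set K) (w : E -> K -> K)
  (p : E -> K -> R) (a : R) :
  is_CMS ini ter d Kp w p a ->
  forall xs : V -> K, (forall i : V, Kp i (xs i)) ->
  forall (x : K) (i0 : V), Kp i0 x ->
  forall m : int, m <= 0 ->
  forall P : probability (SigA e0 m) R,
    (forall (k : nat) (f : nat -> E),
       P (cyl e0 m k f) = (cylP p w x k f)%:E) ->
  forall eps : R, 0 < eps ->
  exists k : int, m <= k /\
  exists B : set (SigA e0 m),
    [/\ measurable B, (P B < eps%:E)%E &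
        forall s : SigA e0 m, ~ B s ->
        forall n : int, k <= n ->
          d (Zmn w s m n x) (Ymn ini w xs s m n)
            <= powR a ((n - m + 1)%:~R / 2) * d x (xs i0)].
Proof.
move=> [[a_gt0 a_lt1] [[d_ge0 _ _ _] _] [_ _ Kp_disj _]
        [_ [w_Kp [_ p_ge0 _ p_off]]] contract] xs xsK x i0 x_i0 m _ P P_cyl.
move=> eps eps_gt0; set r := Num.sqrt a.
have r_gt0 : 0 < r by rewrite sqrtr_gt0.
have r_lt1 : r < 1 by rewrite -sqrtr1 ltr_sqrt.
have one_r_gt0 : 0 < 1 - r by rewrite subr_gt0.
pose F L : set (SigA e0 m) := far_event ini d w a xs x i0 L.
have PF L : (P (F L) <= (r ^+ L)%:E)%E.
  apply: le_trans (measure_far_event d_ge0 (ltW a_gt0) p_ge0 p_off Kp_disj w_Kp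
                     contract x_i0 (xsK i0) P_cyl L) _.
  by rewrite lee_fin exprS ler_piMl ?exprn_ge0 ?ltW.
have [N rN] := exists_expr_lt (ltW r_gt0) r_lt1 (mulr_gt0 eps_gt0 one_r_gt0).
exists (m + N%:Z); split; first by rewrite lerDl.
exists (\bigcup_(L in ~` `I_N) F L); split.
- by apply: bigcup_measurable => L _; apply: far_event_measurable.
- apply: le_lt_trans (measure_bigcup_geometric_tail N _ r_gt0 r_lt1 PF) _.
    by move=> L; apply: far_event_measurable.
  by rewrite lte_fin ltr_pdivrMr.
move=> s s_notB n mN_n; set L := absz (n - m).
have nmL : n - m = L%:Z.
  by rewrite gez0_abs // subr_ge0 (le_trans _ mN_n) ?lerDl.
have -> : n - m + 1 = L.+1%:Z by rewrite nmL -addn1 PoszD.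
rewrite powR_half; last exact: ltW.
apply: (dist_Zmn_Ymn_le nmL) => F_s; apply: s_notB; exists L => //=.
by apply/negP; rewrite -leqNgt -lez_nat -nmL lerBrDl.
Qed.
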